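(* Let $V=\mathbb{C}x+\mathbb{C}y+\mathbb{C}z$ with the action of the Heisenberg group $H_3$ given by $e_1\cdot x=z,\ e_1\cdot y=x,\ e_1\cdot z=y$, $e_2\cdot x=x,\ e_2\cdot y=\omega y,\ e_2\cdot z=\omega^2 z$ ($\omega$ a primitive third root of unity), extended diagonally to tensor powers. For $p=[a:b:c]\in\mathbb{P}^2$ let $W_p\subset V\otimes V$ be the span of $ayz+bzy+cx^2,\ azx+bxz+cy^2,\ axy+byx+cz^2$. Then for every $p\in\mathbb{P}^2$, the space of $H_3$-invariants $(W_p\otimes V\cap V\otimes W_p)^{H_3}$ is 1-dimensional.
   Context: $H_3=\langle e_1,e_2\mid [e_1,e_2]\text{ central},\ e_1^3=e_2^3=1\rangle$ is the Heisenberg group of order 27. The intersection is taken inside $V\otimes V\otimes V$. *)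

From mathcomp Require Import all_boot all_order all_algebra all_field.
From mathcomp.real_closed Require Export mxtens.
Set Implicit Arguments. Unset Strict Implicit. Unset Printing Implicit Defensive.
Import GRing.Theory Num.Theory.
Local Open Scope ring_scope.

(* V = C x + C y + C z, vectors are row vectors 'rV[algC]_3 with coordinates
   (x, y, z) at indices 0, 1, 2.  A linear map g is the matrix whose i-th row
   is g(e_i), acting by v |-> v *m g. *)

Definition rho_e1 : 'M[algC]_3 :=
  \matrix_(i < 3, j < 3)
    (if ((i == 0%N :> nat) && (j == 2%N :> nat))
        || ((i == 1%N :> nat) && (j == 0%N :> nat))
        || ((i == 2%N :> nat) && (j == 1%N :> nat)) then 1 else 0).

Definition rho_e2 (w : algC) : 'M[algC]_3 :=
  \matrix_(i < 3, j < 3) (if i == j then w ^+ i else 0).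

Definition act3 (g : 'M[algC]_3) : 'M[algC]_(3 * 3 * 3) := (g *t g) *t g.

Definition ex : 'rV[algC]_3 := delta_mx 0 0.
Definition ey : 'rV[algC]_3 := delta_mx 0 1.
Definition ez : 'rV[algC]_3 := delta_mx 0 2.

Definition Wp (a b c : algC) : 'M[algC]_(3, 3 * 3) :=
  col_mx (a *: (ey *t ez) + b *: (ez *t ey) + c *: (ex *t ex))
   (col_mx (a *: (ez *t ex) + b *: (ex *t ez) + c *: (ey *t ey))
           (a *: (ex *t ey) + b *: (ey *t ex) + c *: (ez *t ez))).

Definition WpV (a b c : algC) : 'M[algC]_(3 * 3, 3 * 3 * 3) :=
  Wp a b c *t (1%:M : 'M_3).
Definition VWp (a b c : algC) : 'M[algC]_(3 * 3, 3 * 3 * 3) :=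
  (1%:M : 'M_3) *t Wp a b c.

(* H_3-invariant vectors of V (x) V (x) V: the fixed space of the
   (generators e1, e2 of the) group H_3. *)
Definition invariants3 (w : algC) : 'M[algC]_(3 * 3 * 3) :=
  (kermx (act3 rho_e1 - 1%:M) :&: kermx (act3 (rho_e2 w) - 1%:M))%MS.

From mathcomp Require Import all_boot all_order all_algebra all_field.
From mathcomp.real_closed Require Import mxtens.
Set Implicit Arguments. Unset Strict Implicit. Unset Printing Implicit Defensive.
Import GRing.Theory.
Local Open Scope ring_scope.

(* Index V by Z/3.  A tensor of V (x) V (x) V is fixed by e1 iff its coordinates
   are invariant under the shift (i, j, k) |-> (i + 1, j + 1, k + 1), and fixed
   by e2 iff they vanish off the weight-zero triples i + j + k = 0.  Such a
   tensor is determined by its coordinates at (i, -i, 0); for an element of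
   W_p (x) V these are lam * (c, a, b), where lam is its coefficient on
   w_0 (x) x, so the invariants of W_p (x) V are spanned by
   Phi = sum_k w_k (x) x_k (w_k the spanning tensors of W_p).  By the cyclic
   symmetry of the w_k, also Phi = sum_i x_i (x) w_i lies in V (x) W_p, and
   Phi <> 0 because one of a, b, c is. *)

Section TensorCoordinates.
Variable R : pzRingType.

Lemma sum_mxtens_index m n (F : 'I_(m * n) -> R) :
  \sum_l F l = \sum_i \sum_j F (mxtens_index (i, j)).
Proof.
rewrite (reindex (@mxtens_index m n)) /=; last first.
  by exists (@mxtens_unindex m n) => x _; [apply: mxtens_indexK|apply: mxtens_unindexK].
by rewrite pair_big; apply: eq_bigr => -[i j].
Qed.

Lemma mulmx_tensmxE m n p q (v : 'rV[R]_(m * n)) (A : 'M_(m, p)) (B : 'M_(n, q)) i j :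
  (v *m (A *t B)) 0 (mxtens_index (i, j)) =
  \sum_k \sum_l v 0 (mxtens_index (k, l)) * (A k i * B l j).
Proof.
rewrite mxE sum_mxtens_index; apply: eq_bigr => k _; apply: eq_bigr => l _.
by rewrite tensmxE.
Qed.

Lemma mulmx_tensmx1E m n q (v : 'rV[R]_(m * n)) (A : 'M_(m, q)) i j :
  (v *m (A *t 1%:M)) 0 (mxtens_index (i, j)) =
  \sum_k v 0 (mxtens_index (k, j)) * A k i.
Proof.
rewrite mulmx_tensmxE; apply: eq_bigr => k _.
rewrite (big_only1 j) // => [|l /negPf jl _].
  by rewrite mxE eqxx mulr1.
by rewrite mxE jl !mulr0.
Qed.

Lemma mulmx_tens1mxE m n q (v : 'rV[R]_(m * n)) (B : 'M_(n, q)) i j :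
  (v *m (1%:M *t B)) 0 (mxtens_index (i, j)) =
  \sum_l v 0 (mxtens_index (i, l)) * B l j.
Proof.
rewrite mulmx_tensmxE (big_only1 i) //.
  by apply: eq_bigr => l _; rewrite mxE eqxx mul1r.
by move=> k /negPf ik _; apply: big1 => l _; rewrite mxE ik mul0r mulr0.
Qed.

Lemma mxtens_index_assoc m n p (i : 'I_m) (j : 'I_n) (k : 'I_p) :
  val (mxtens_index (mxtens_index (i, j), k)) =
  val (mxtens_index (i, mxtens_index (j, k))).
Proof. by rewrite /= mulnDl -mulnA addnA. Qed.

Definition coord3 m n p (v : 'rV[R]_(m * n * p)) i j k :=
  v 0 (mxtens_index (mxtens_index (i, j), k)).

Lemma coord3_inj m n p (u v : 'rV[R]_(m * n * p)) :
  (forall i j k, coord3 u i j k = coord3 v i j k) -> u = v.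
Proof.
move=> uv; apply/rowP => l; case: (mxtens_indexP l) => ij k.
by case: (mxtens_indexP ij) => i j; apply: uv.
Qed.

Lemma coord3Z m n p x (v : 'rV[R]_(m * n * p)) i j k :
  coord3 (x *: v) i j k = x * coord3 v i j k.
Proof. by rewrite /coord3 mxE. Qed.

Lemma coord3_act_monomial n (g : 'M[R]_n) (f : 'I_n -> 'I_n) (d : 'I_n -> R)
    (v : 'rV_(n * n * n)) i j k :
  (forall i' i, g i' i = (i' == f i)%:R * d i) ->
  coord3 (v *m ((g *t g) *t g)) i j k =
  coord3 v (f i) (f j) (f k) * (d i * d j * d k).
Proof.
move=> gE; rewrite /coord3 mulmx_tensmxE.
rewrite (big_only1 (mxtens_index (f i, f j))) //; last first.
  move=> ij' + _; case: (mxtens_indexP ij') => i' j' ne.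
  apply: big1 => k' _; rewrite !tensmxE !gE.
  have [ei | _] := eqVneq i' (f i); last by rewrite !(mul0r, mulr0).
  have [ej | _] := eqVneq j' (f j); last by rewrite !(mul0r, mulr0).
  by rewrite ei ej eqxx in ne.
rewrite (big_only1 (f k)) //; last first.
  by move=> k' /negPf ne _; rewrite gE ne !(mul0r, mulr0).
by rewrite !tensmxE !gE !eqxx !mul1r.
Qed.

Definition diag_tens n : 'rV[R]_(n * n) :=
  \row_l ((mxtens_unindex l).1 == (mxtens_unindex l).2)%:R.

Lemma diag_tensE n (i j : 'I_n) : diag_tens n 0 (mxtens_index (i, j)) = (i == j)%:R.
Proof. by rewrite mxE mxtens_indexK. Qed.

End TensorCoordinates.

Arguments diag_tens {R} n.

Lemma ord3P (i : 'I_3) : [\/ i = 0, i = 1 | i = 2].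
Proof.
by case: i => [[|[|[|//]]] ?]; [constructor 1 | constructor 2 | constructor 3];
  apply: val_inj.
Qed.

Ltac ord3_cases i := case: (ord3P i) => ->.

Lemma prim3_weight_eq1 (w : algC) (i j k : 'I_3) : 3.-primitive_root w ->
  (w ^+ i * w ^+ j * w ^+ k == 1) = (i + j + k == 0).
Proof. by move=> pw; rewrite -!exprD -(prim_order_dvd pw) -val_eqE /= modnDml. Qed.

Definition shift_invariant (T : Type) (f : 'I_3 -> 'I_3 -> 'I_3 -> T) :=
  forall i j k, f (i + 1) (j + 1) (k + 1) = f i j k.

Definition weight0 (T : nmodType) (f : 'I_3 -> 'I_3 -> 'I_3 -> T) :=
  forall i j k, i + j + k != 0 -> f i j k = 0.

Lemma shift_invariantD (T : Type) (f : 'I_3 -> 'I_3 -> 'I_3 -> T) :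
  shift_invariant f -> forall s i j k, f (i + s) (j + s) (k + s) = f i j k.
Proof.
move=> fS s i j k; ord3_cases s; rewrite ?addr0 ?fS //.
by have -> : (2 : 'I_3) = 1 + 1 by []; rewrite !addrA !fS.
Qed.

Lemma shift_invariant_sub (T : Type) (f : 'I_3 -> 'I_3 -> 'I_3 -> T) i j k :
  shift_invariant f -> f i j k = f (i - k) (j - k) 0.
Proof. by move=> fS; rewrite -(shift_invariantD fS k (i - k)) !subrK add0r. Qed.

(* The shift by -k keeps the weight, as 3 k = 0 in Z/3. *)
Lemma eq_shift_weight0 (T : nmodType) (f g : 'I_3 -> 'I_3 -> 'I_3 -> T) :
  shift_invariant f -> shift_invariant g -> weight0 f -> weight0 g ->
  (forall i j, i + j = 0 -> f i j 0 = g i j 0) -> forall i j k, f i j k = g i j k.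
Proof.
move=> fS gS f0 g0 fg i j k.
rewrite (shift_invariant_sub _ _ _ fS) (shift_invariant_sub _ _ _ gS).
have [ij0 | ij_neq0] := eqVneq (i - k + (j - k)) 0; first exact: fg ij0.
by rewrite f0 ?g0 // addr0.
Qed.

Definition wcoef (a b c : algC) (l i j : 'I_3) : algC :=
  a * ((i == l + 1) && (j == l + 2))%:R + b * ((i == l + 2) && (j == l + 1))%:R
  + c * ((i == l) && (j == l))%:R.

Ltac wcoef_cases l i j :=
  rewrite /wcoef; ord3_cases l; ord3_cases i; ord3_cases j; rewrite /=.

Lemma wcoef_shift a b c l i j : wcoef a b c (l + 1) (i + 1) (j + 1) = wcoef a b c l i j.
Proof. by wcoef_cases l i j. Qed.

Lemma wcoef_rot a b c l i j : wcoef a b c l i j = wcoef a b c i j l.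
Proof. by wcoef_cases l i j. Qed.

Lemma wcoef_eq0 a b c l i j : i + j + l != 0 -> wcoef a b c l i j = 0.
Proof. by wcoef_cases l i j; rewrite // !mulr0 !addr0. Qed.

Lemma WpE a b c l i j : Wp a b c l (mxtens_index (i, j)) = wcoef a b c l i j.
Proof.
have rowE (r0 : 'I_(1 * 1)) (l0 : 'I_3) : l = (l0 + r0)%N :> nat -> l = l0.
  by rewrite [r0]ord1 addn0 => l_l0; apply: val_inj.
rewrite /Wp mxE; case: splitP => [r0 /(rowE _ 0) -> | l' l_l'].
  rewrite [r0]ord1 !mxE !mxtens_indexK -!natrM !mulnb /wcoef.
  by ord3_cases i; ord3_cases j.
rewrite mxE; case: splitP => [r1 l'_r1 | r2 l'_r2].
  have -> : l = 1 by apply: (rowE r1); rewrite l_l' l'_r1.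
  rewrite [r1]ord1 !mxE !mxtens_indexK -!natrM !mulnb /wcoef.
  by ord3_cases i; ord3_cases j.
have -> : l = 2 by apply: (rowE r2); rewrite l_l' l'_r2 addnA.
rewrite [r2]ord1 !mxE !mxtens_indexK -!natrM !mulnb /wcoef.
by ord3_cases i; ord3_cases j.
Qed.

Lemma coord3_WpV a b c (r : 'rV_(3 * 3)) i j k :
  coord3 (r *m WpV a b c) i j k = \sum_l r 0 (mxtens_index (l, k)) * wcoef a b c l i j.
Proof. by rewrite /coord3 mulmx_tensmx1E; under eq_bigr do rewrite WpE. Qed.

Lemma coord3_VWp a b c (r : 'rV_(3 * 3)) i j k :
  coord3 (r *m VWp a b c) i j k = \sum_l r 0 (mxtens_index (i, l)) * wcoef a b c l j k.
Proof.
rewrite /coord3.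
have -> : mxtens_index (mxtens_index (i, j), k) =
          mxtens_index (i, mxtens_index (j, k)) :> 'I_27.
  exact/val_inj/mxtens_index_assoc.
under eq_bigr do rewrite -WpE.
exact: (mulmx_tens1mxE r (Wp a b c) i (mxtens_index (j, k))).
Qed.

(* Phi = sum_k w_k (x) x_k, where w_k is the k-th row of Wp. *)
Definition Phi a b c : 'rV[algC]_(3 * 3 * 3) := diag_tens 3 *m WpV a b c.

Lemma coord3_Phi a b c i j k : coord3 (Phi a b c) i j k = wcoef a b c k i j.
Proof.
rewrite coord3_WpV (big_only1 k) // => [|l /negPf l_k _]; rewrite diag_tensE ?l_k.
  by rewrite eqxx mul1r.
by rewrite mul0r.
Qed.

Lemma Phi_VWp a b c : Phi a b c = diag_tens 3 *m VWp a b c.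
Proof.
apply: coord3_inj => i j k; rewrite coord3_Phi coord3_VWp (big_only1 i) //.
  by rewrite diag_tensE eqxx mul1r wcoef_rot.
by move=> l /negPf l_i _; rewrite diag_tensE eq_sym l_i mul0r.
Qed.

Lemma coord3_act_e1 (v : 'rV_(3 * 3 * 3)) i j k :
  coord3 (v *m act3 rho_e1) i j k = coord3 v (i + 1) (j + 1) (k + 1).
Proof.
rewrite (@coord3_act_monomial _ _ _ (+%R^~ 1) (fun=> 1)) ?mulr1 // => i' i''.
by rewrite mulr1 mxE; ord3_cases i'; ord3_cases i''.
Qed.

Lemma coord3_act_e2 w (v : 'rV_(3 * 3 * 3)) i j k :
  coord3 (v *m act3 (rho_e2 w)) i j k = coord3 v i j k * (w ^+ i * w ^+ j * w ^+ k).
Proof.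
apply: (@coord3_act_monomial _ _ _ id (fun i => w ^+ i)) => i' i''.
by rewrite mxE; case: eqP => [-> | _]; rewrite ?mul1r ?mul0r.
Qed.

Lemma invariants3P w v : 3.-primitive_root w ->
  reflect (shift_invariant (coord3 v) /\ weight0 (coord3 v)) (v <= invariants3 w)%MS.
Proof.
move=> pw; rewrite sub_capmx !sub_kermx !mulmxBr !mulmx1 !subr_eq0.
apply: (iffP andP) => [[/eqP e1 /eqP e2] | [vS v0]]; split.
- by move=> i j k; rewrite -coord3_act_e1 e1.
- move=> i j k; rewrite -(prim3_weight_eq1 _ _ _ pw) => s_ne1.
  apply/eqP; apply: contraNT s_ne1 => x_ne0.
  by rewrite -(inj_eq (mulfI x_ne0)) mulr1 -coord3_act_e2 e2.
- by apply/eqP/coord3_inj => i j k; rewrite coord3_act_e1 vS.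
- apply/eqP/coord3_inj => i j k; rewrite coord3_act_e2.
  have [/eqP | /v0 ->] := eqVneq (i + j + k) 0; last by rewrite mul0r.
  by rewrite -(prim3_weight_eq1 _ _ _ pw) => /eqP ->; rewrite mulr1.
Qed.

Lemma Phi_sub_invariants3 w a b c :
  3.-primitive_root w -> (Phi a b c <= invariants3 w)%MS.
Proof.
move=> pw; apply/invariants3P => //; split => i j k; rewrite !coord3_Phi.
  exact: wcoef_shift.
exact: wcoef_eq0.
Qed.

Lemma Phi_neq0 a b c : [|| a != 0, b != 0 | c != 0] -> Phi a b c != 0.
Proof.
apply: contraTneq => Phi0.
have coord0 i j k : wcoef a b c k i j = 0 by rewrite -coord3_Phi Phi0 /coord3 mxE.
move: (coord0 0 0 0) (coord0 1 2 0) (coord0 2 1 0).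
by rewrite /wcoef /= !(mulr0, mulr1, addr0, add0r) => -> -> ->; rewrite eqxx.
Qed.

Lemma capmx_WpV_invariants3_sub_Phi w a b c : 3.-primitive_root w ->
  (WpV a b c :&: invariants3 w <= Phi a b c)%MS.
Proof.
move=> pw; apply/row_subP => l; have := row_sub l (WpV a b c :&: invariants3 w)%MS.
rewrite sub_capmx => /andP[/submxP[r ->] /(invariants3P _ pw)[vS v0]].
set lam := r 0 (mxtens_index (0, 0)).
have /(invariants3P _ pw)[PhiS Phi0] := scalemx_sub lam (Phi_sub_invariants3 a b c pw).
suff -> : r *m WpV a b c = lam *: Phi a b c by rewrite scalemx_sub.
apply/coord3_inj/eq_shift_weight0 => // i j ij0.
rewrite coord3Z coord3_Phi coord3_WpV (big_only1 0) // => m m_ne0 _.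
by rewrite wcoef_eq0 ?mulr0 // ij0 add0r.
Qed.

Theorem mainTheorem7 (w : algC) (a b c : algC) :
  3.-primitive_root w ->
  [|| a != 0, b != 0 | c != 0] ->
  \rank ((WpV a b c :&: VWp a b c) :&: invariants3 w)%MS = 1%N.
Proof.
move=> pw p_nz.
have Phi_sub : (Phi a b c <= (WpV a b c :&: VWp a b c) :&: invariants3 w)%MS.
  rewrite sub_capmx (Phi_sub_invariants3 _ _ _ pw) andbT sub_capmx.
  by rewrite submxMl Phi_VWp submxMl.
have sub_Phi : ((WpV a b c :&: VWp a b c) :&: invariants3 w <= Phi a b c)%MS.
  apply: submx_trans (capmx_WpV_invariants3_sub_Phi a b c pw).
  exact: capmxS (capmxSl _ _) (submx_refl _).
by rewrite (eqmx_rank (B := Phi a b c)) ?sub_Phi ?Phi_sub // rank_rV Phi_neq0.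
Qed.
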